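(* Let $H\in(\tfrac12,1)$, $\sigma>0$. (1) For all integers $1\le i\le n-1<N$, $$\sigma c_H (n-1)^{H-\frac12}I_n(i)\le j_n^H(i)\le \sigma c_H\, n^{H-\frac12}I_n(i),$$ where $I_n(i)=\int_{i-1}^i x^{\frac12-H}\phi_n^H(x)dx$ and $\phi_n^H(x)=(n-x)^{H-\frac12}-(n-1-x)^{H-\frac12}$. (2) For all integers $1<n\le N$, $$g_H\le g_n^H\le g_H\Big(1+\frac1{n-1}\Big)^{H-\frac12}.$$
   Context: $c_H=\sqrt{\frac{2H\,\Gamma(\frac32-H)}{\Gamma(H+\frac12)\Gamma(2-2H)}}$, $C_H=c_H(H-\frac12)$, $g_H=\frac{\sigma c_H}{H+\frac12}$, $j_n^H(i)=\sigma C_H\int_{i-1}^i x^{\frac12-H}\Big(\int_0^1(v+n-1)^{H-\frac12}(v+n-1-x)^{H-\frac32}dv\Big)dx$, $g_n^H=\sigma C_H\int_{n-1}^n x^{\frac12-H}(n-x)^{H-\frac12}\Big(\int_0^1(y(n-x)+x)^{H-\frac12}y^{H-\frac32}dy\Big)dx$. *)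

From HB Require Import structures.
From mathcomp Require Import all_boot all_order all_algebra.
From mathcomp Require Import all_classical all_reals all_analysis.
Set Implicit Arguments. Unset Strict Implicit. Unset Printing Implicit Defensive.
Import Order.TTheory GRing.Theory Num.Theory.
Import numFieldNormedType.Exports.
Local Open Scope classical_set_scope.
Local Open Scope ring_scope.

Section Defs.
Variable R : realType.
Notation mu := (@lebesgue_measure R).

Definition Gamma (s : R) : R :=
  fine (\int[mu]_(t in `]0%R, +oo[) ((t `^ (s - 1)) * expR (- t))%:E)%E.

Definition c_H (H : R) : R :=
  Num.sqrt ((2 * H * Gamma (3 / 2 - H)) /
            (Gamma (H + 1 / 2) * Gamma (2 - 2 * H))).

Definition C_H (H : R) : R := c_H H * (H - 1 / 2).

Definition g_H (H sigma : R) : R := sigma * c_H H / (H + 1 / 2).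

Definition j_nH (H sigma : R) (n i : nat) : \bar R :=
  ((sigma * C_H H)%:E *
   \int[mu]_(x in `[(i%:R - 1)%R, i%:R]%classic)
     ((x `^ (1 / 2 - H))%:E *
      \int[mu]_(v in `[0%R, 1%R]%classic)
        (((v + n%:R - 1) `^ (H - 1 / 2)) *
         ((v + n%:R - 1 - x) `^ (H - 3 / 2)))%:E))%E.

Definition g_nH (H sigma : R) (n : nat) : \bar R :=
  ((sigma * C_H H)%:E *
   \int[mu]_(x in `[(n%:R - 1)%R, n%:R]%classic)
     ((x `^ (1 / 2 - H) * (n%:R - x) `^ (H - 1 / 2))%:E *
      \int[mu]_(y in `[0%R, 1%R]%classic)
        (((y * (n%:R - x) + x) `^ (H - 1 / 2)) * (y `^ (H - 3 / 2)))%:E))%E.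

Definition phi_nH (H : R) (n : nat) (x : R) : R :=
  (n%:R - x) `^ (H - 1 / 2) - (n%:R - 1 - x) `^ (H - 1 / 2).

Definition I_n (H : R) (n i : nat) : \bar R :=
  (\int[mu]_(x in `[(i%:R - 1)%R, i%:R]%classic)
     ((x `^ (1 / 2 - H)) * phi_nH H n x)%:E)%E.

End Defs.

From HB Require Import structures.
From mathcomp Require Import all_boot all_order all_algebra.
From mathcomp Require Import all_classical all_reals all_analysis.
From mathcomp Require Import measurable_realfun ring lra zify.
Import Order.TTheory GRing.Theory Num.Theory.
Import numFieldNormedType.Exports.
Local Open Scope classical_set_scope.
Local Open Scope ring_scope.

(* Both quantities are double integrals of nonnegative integrands whose inner
   integral runs over [0, 1] and is sandwiched by freezing one factor at its
   extreme values.  For j_n^H(i), the factor (v + n - 1)^(H-1/2) lies between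
   (n-1)^(H-1/2) and n^(H-1/2), while int_0^1 (v + c)^(H-3/2) dv with
   c = n - 1 - x equals phi_n^H(x) / (H - 1/2); as C_H = c_H (H - 1/2) this is
   (1).  For g_n^H, the factor (y (n-x) + x)^(H-1/2) lies between x^(H-1/2)
   and n^(H-1/2), and int_0^1 y^(H-3/2) dy = 1 / (H - 1/2); the x^(H-1/2) of
   the lower bound cancels x^(1/2-H), while for the upper bound
   x^(1/2-H) <= (n-1)^(1/2-H) on [n-1, n].  Together with
   int_(n-1)^n (n-x)^(H-1/2) dx = 1 / (H + 1/2) this gives (2).  The exponent
   H - 3/2 is negative, so the power integrals over [0, 1] are improper and
   are evaluated by a fundamental theorem of calculus on open intervals. *)

Section powR_calculus.
Context {R : realType}.
Implicit Types (p q r x : R).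

Lemma continuous_powR p x : 0 < x -> {for x, continuous (@powR R ^~ p)}.
Proof.
move=> x0; apply/differentiable_continuous/derivable1_diffP.
by apply: derivable_powR; rewrite in_itv /= andbT.
Qed.

Lemma is_derive_powR_comp p [g : R -> R] [x dg : R] : 0 < g x ->
  is_derive x 1 g dg -> is_derive x 1 (fun y => g y `^ p) (p * g x `^ (p - 1) * dg).
Proof. by move=> gx0 gdg; exact: is_derive1_comp (is_derive1_powR p gx0) gdg. Qed.

Lemma le0_ger_powR r : r <= 0 -> {in Num.pos &, {homo @powR R ^~ r : x y /~ x <= y}}.
Proof.
move=> r0 x y; rewrite !posrE => x0 y0 yx.
rewrite -(opprK r) (powRN x) (powRN y) lef_pV2 ?posrE ?powR_gt0 //.
by apply: ge0_ler_powR; rewrite ?nnegrE ?oppr_ge0 // ltW.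
Qed.

Lemma powR_subr_cvg_left q (m : R) : 0 < q -> (m - x) `^ q @[x --> m^'-] --> 0.
Proof.
move=> q0; apply/cvg_at_leftP => u [um u_cvg].
apply: (cvg_at_rightP _ 0 0).1 (powR_cvg0 q0) _ (conj _ _) => [n|].
  by rewrite subr_gt0.
by rewrite -(subrr m); apply: cvgB => //; exact: cvg_cst.
Qed.

Lemma powR_one_plus_inv_sub1 p (m : R) : 1 < m ->
  (1 + 1 / (m - 1)) `^ p = m `^ p * (m - 1) `^ (- p).
Proof.
move=> m1; have -> : 1 + 1 / (m - 1) = m * (m - 1)^-1.
  by field; rewrite subr_eq0 gt_eqF.
rewrite powRM ?invr_ge0 ?subr_ge0 ?(ltW m1) ?(le_trans ler01 (ltW m1)) //.
by rewrite -powR_inv1 ?subr_ge0 ?(ltW m1) // -powRrM mulN1r.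
Qed.

End powR_calculus.

Section improper_FTC2.
Context {R : realType}.
Notation mu := (@lebesgue_measure R).
Implicit Types (a b : R) (f F : R -> R).

Lemma itv_oo_bigcup_cc a b : a < b ->
  `]a, b[%classic = \bigcup_k `[a + (b - a) / k.+3%:R, b - (b - a) / k.+3%:R]%classic.
Proof.
move=> ab; apply/seteqP; split => [x|x [k _]]; rewrite /= !in_itv /=; last first.
  set d := (b - a) / k.+3%:R; have d0 : 0 < d by rewrite divr_gt0 // subr_gt0.
  by move=> /andP[ax xb]; apply/andP; split; lra.
move=> /andP[ax xb]; pose e := Num.min (x - a) (b - x).
have e0 : 0 < e by rewrite lt_min !subr_gt0 ax xb.
set k := Num.truncn ((b - a) / e); exists k => //=; rewrite /= in_itv /=.
set d := (b - a) / k.+3%:R.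
have de : d < e.
  rewrite ltr_pdivrMr // -ltr_pdivrMl // mulrC.
  by apply: lt_le_trans (truncnS_gt _) _; rewrite ler_nat -addn2 leq_addr.
have : e <= x - a /\ e <= b - x by split; rewrite ge_min lexx ?orbT.
by move=> [? ?]; apply/andP; split; lra.
Qed.

Lemma cvg_shrink_itv F a b (d : R^nat) : (forall k, 0 < d k) -> d k @[k --> \oo] --> 0 ->
  F x @[x --> a^'+] --> F a -> F x @[x --> b^'-] --> F b ->
  F (b - d k) - F (a + d k) @[k --> \oo] --> F b - F a.
Proof.
move=> d_gt0 d_cvg Fa Fb; apply: cvgB.
- apply: (cvg_at_leftP F b (F b)).1 Fb _ (conj _ _) => [k|].
    by rewrite ltrBlDr ltrDl.
  by rewrite -[X in _ --> X]subr0; apply: cvgB => //; exact: cvg_cst.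
- apply: (cvg_at_rightP F a (F a)).1 Fa _ (conj _ _) => [k|].
    by rewrite ltrDl.
  by rewrite -[X in _ --> X]addr0; apply: cvgD => //; exact: cvg_cst.
Qed.

Lemma continuous_FTC2_subitv f F a b u v : a < u -> u < v -> v < b ->
  {in `]a, b[, continuous f} -> {in `]a, b[, forall x, derivable F x 1} ->
  {in `]a, b[, F^`()%classic =1 f} ->
  (\int[mu]_(x in `[u, v]) (f x)%:E = (F v - F u)%:E)%E.
Proof.
move=> au uv vb cf dF dFf.
have uv_ab x : x \in `[u, v] -> x \in `]a, b[.
  by rewrite !in_itv /= => /andP[ux xv]; apply/andP; split; lra.
have uv_oo x : x \in `]u, v[ -> x \in `]a, b[.
  by move=> x_uv; apply: uv_ab; move: x_uv; exact: subset_itv_oo_cc.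
have cF x : x \in `[u, v] -> {for x, continuous F}.
  by move=> /uv_ab /dF /derivable1_diffP /differentiable_continuous.
rewrite (@continuous_FTC2 _ f F) ?EFinB //.
- by apply: continuous_in_subspaceT => x /[!inE] /uv_ab; exact: cf.
- split; first by move=> x /uv_oo; exact: dF.
  + by apply: cvg_at_right_filter; apply: cF; rewrite in_itv /= lexx ltW.
  + by apply: cvg_at_left_filter; apply: cF; rewrite in_itv /= lexx ltW.
- by move=> x /uv_oo; exact: dFf.
Qed.

(* [f] may be unbounded near [a] and [b], so [continuous_FTC2] does not apply
   directly: exhaust ]a, b[ by the closed intervals of [itv_oo_bigcup_cc] and
   pass to the limit by monotone convergence. *)
Lemma ge0_open_continuous_FTC2 f F a b : a < b ->
  {in `]a, b[, forall x, 0 <= f x} -> {in `]a, b[, continuous f} ->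
  derivable_oo_LRcontinuous F a b -> {in `]a, b[, F^`()%classic =1 f} ->
  (\int[mu]_(x in `[a, b]) (f x)%:E = (F b - F a)%:E)%E.
Proof.
move=> ab f0 cf [dF Fa Fb] dFf.
pose d k := (b - a) / k.+3%:R.
have d_gt0 k : 0 < d k by rewrite divr_gt0 // subr_gt0.
have d_lt k : 2 * d k < b - a.
  by rewrite mulrCA -[ltRHS]mulr1 ltr_pM2l ?subr_gt0 // ltr_pdivrMr // mul1r ltr_nat.
have d_cvg : d k @[k --> \oo] --> 0.
  rewrite -(mulr0 (b - a)); apply: cvgM; first exact: cvg_cst.
  have := @cvg_harmonic R; rewrite -(cvg_shiftn 2); apply: cvg_trans.
  by apply: near_eq_cvg; near=> k; rewrite /= addn2.
pose A k := `[a + d k, b - d k]%classic.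
have A_sub k : A k `<=` `]a, b[%classic.
  by rewrite (itv_oo_bigcup_cc _ _ ab); exact: bigcup_sup.
have A_nd : {homo A : n m / (n <= m)%N >-> (n <= m)%O}.
  move=> n m nm; apply/subsetPset => x; rewrite /A /= !in_itv /=.
  have : d m <= d n.
    by rewrite ler_pdivrMr // mulrAC ler_pdivlMr // ler_pM2l ?subr_gt0 // ler_nat.
  by move=> dmn /andP[? ?]; apply/andP; split; lra.
have mf : measurable_fun `]a, b[ (EFin \o f).
  apply/measurable_EFinP; apply: open_continuous_measurable_fun; first exact: interval_open.
  by move=> x; rewrite inE /=; exact: cf.
have intA k : (\int[mu]_(x in A k) (f x)%:E = (F (b - d k) - F (a + d k))%:E)%E.
  move: (d_gt0 k) (d_lt k) => dgt dlt.
  rewrite /A (@continuous_FTC2_subitv f F a b) //; lra.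
rewrite (integral_itv_bndoo _ _ mf).
have := @ge0_nondecreasing_set_cvg_integral _ _ _ _ _ mu A_nd (fun k => measurable_itv _)
  (fun k => measurable_funS (measurable_itv _) (A_sub k) mf)
  (fun k x Ax => f0 x (A_sub k x Ax)).
rewrite -itv_oo_bigcup_cc //.
under eq_cvg do rewrite intA.
have FabE : (F (b - d k) - F (a + d k))%:E @[k --> \oo] --> (F b - F a)%:E.
  by apply: cvg_EFin (cvg_shrink_itv _ _ _ _ d_gt0 d_cvg Fa Fb); exact: nearW.
by move=> int_cvg; exact: (cvg_unique (@ereal_hausdorff R) int_cvg FabE).
Unshelve. all: by end_near. Qed.

End improper_FTC2.

Section powR_integrals.
Context {R : realType}.
Notation mu := (@lebesgue_measure R).

Lemma integral01_powR_addr (p c : R) : 0 < p -> 0 <= c ->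
  (\int[mu]_(v in `[0%R, 1%R]) ((v + c) `^ (p - 1))%:E =
   (((1 + c) `^ p - c `^ p) / p)%:E)%E.
Proof.
move=> p0 c0; pose F v := p^-1 * (v + c) `^ p.
have dF v : 0 < v + c -> is_derive v 1 F ((v + c) `^ (p - 1)).
  move=> vc0; have dvc : is_derive v 1 (fun y => y + c) (1 + 0).
    exact: is_deriveD (is_derive_id v 1) (is_derive_cst c v 1).
  have := is_deriveZ p^-1 (is_derive_powR_comp p (g := fun y => y + c) vc0 dvc).
  move=> /(is_derive_eq (f := F)); apply.
  by rewrite addr0 mulr1 /GRing.scale /= mulrA mulVf ?mul1r ?gt_eqF.
have cF v : 0 < v + c -> {for v, continuous F}.
  by move=> /dF [dFv _]; apply/differentiable_continuous/derivable1_diffP.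
have pos v : v \in `]0, 1[ -> 0 < v + c by rewrite in_itv /= => /andP[v0 _]; lra.
rewrite (@ge0_open_continuous_FTC2 _ _ F) //.
- by congr EFin; rewrite /F add0r -mulrBr mulrC.
- by move=> v _; exact: powR_ge0.
- move=> v /pos vc0.
  apply: (continuous_comp (f := fun y => y + c) (g := @powR R ^~ (p - 1))).
    by apply: continuousD => //; exact: cvg_cst.
  exact: continuous_powR.
- split.
  + by move=> v /pos /dF [].
  + have [c_eq0|c_neq0] := eqVneq c 0; last first.
      by apply: cvg_at_right_filter; apply: cF; rewrite add0r lt_neqAle eq_sym c_neq0.
    rewrite /F c_eq0 addr0 powR0 ?gt_eqF // mulr0 -[X in _ --> X](mulr0 p^-1).
    by apply: cvgMl_tmp; under eq_fun do rewrite addr0; exact: powR_cvg0.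
  + by apply: cvg_at_left_filter; apply: cF; lra.
- by move=> v /pos /dF [_ <-]; rewrite derive1E.
Qed.

Lemma integral_powR_subr (p b m : R) : 0 < p -> b < m ->
  (\int[mu]_(x in `[b, m]) ((m - x) `^ (p - 1))%:E = ((m - b) `^ p / p)%:E)%E.
Proof.
move=> p0 bm; pose F x := - p^-1 * (m - x) `^ p.
have dF x : x < m -> is_derive x 1 F ((m - x) `^ (p - 1)).
  rewrite -subr_gt0 => mx0.
  have dmx : is_derive x 1 (fun y => m - y) (0 - 1).
    exact: is_deriveD (is_derive_cst m x 1) (is_deriveN (is_derive_id x 1)).
  have := is_deriveZ (- p^-1) (is_derive_powR_comp p (g := fun y => m - y) mx0 dmx).
  move=> /(is_derive_eq (f := F)); apply.
  by rewrite add0r mulrN1 /GRing.scale /= mulrN mulNr opprK mulrA mulVf ?mul1r ?gt_eqF.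
have cF x : x < m -> {for x, continuous F}.
  by move=> /dF [dFx _]; apply/differentiable_continuous/derivable1_diffP.
have lt_m x : x \in `]b, m[ -> x < m by rewrite in_itv /= => /andP[].
rewrite (@ge0_open_continuous_FTC2 _ _ F) //.
- by congr EFin; rewrite /F subrr powR0 ?gt_eqF // mulr0 sub0r mulNr opprK mulrC.
- by move=> x _; exact: powR_ge0.
- move=> x /lt_m; rewrite -subr_gt0 => mx0.
  apply: (continuous_comp (f := fun y => m - y) (g := @powR R ^~ (p - 1))).
    by apply: continuousB => //; exact: cvg_cst.
  exact: continuous_powR.
- split.
  + by move=> x /lt_m /dF [].
  + by apply: cvg_at_right_filter; apply: cF.
  + rewrite /F subrr powR0 ?gt_eqF // mulr0 -[X in _ --> X](mulr0 (- p^-1)).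
    by apply: cvgMl_tmp; exact: powR_subr_cvg_left.
- by move=> x /lt_m /dF [_ <-]; rewrite derive1E.
Qed.

End powR_integrals.

Section nonnegative_integral_bounds.
Context d (T : measurableType d) (R : realType).
Variable mu : {measure set T -> \bar R}.
Local Open Scope ereal_scope.

(* No measurability is needed: the integral of a nonnegative function is a
   supremum over the nonnegative simple functions below it. *)
Lemma le_ge0_integral (D : set T) (f g : T -> \bar R) :
  (forall x, D x -> 0 <= f x) -> (forall x, D x -> f x <= g x) ->
  \int[mu]_(x in D) f x <= \int[mu]_(x in D) g x.
Proof.
move=> f0 fg.
have g0 x : D x -> 0 <= g x by move=> Dx; exact: le_trans (f0 x Dx) (fg x Dx).
rewrite (ge0_integralE mu f0) (ge0_integralE mu g0).
apply: ereal_sup_le => _ [h hf <-]; exists h => // x.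
apply: le_trans (hf x) _; rewrite /patch; case: ifPn => // /[!inE] Dx.
exact: fg.
Qed.

Lemma integralM_bounds (D : set T) (g h : T -> R) (lo hi : R) :
  measurable D -> measurable_fun D h -> (forall x, D x -> (0 <= h x)%R) ->
  (0 <= lo)%R -> (forall x, D x -> lo <= g x <= hi)%R ->
  lo%:E * \int[mu]_(x in D) (h x)%:E <= \int[mu]_(x in D) (g x * h x)%:E /\
  \int[mu]_(x in D) (g x * h x)%:E <= hi%:E * \int[mu]_(x in D) (h x)%:E.
Proof.
move=> mD mh h0 lo0 glohi.
have [hi0|hi_lt0] := leP 0%R hi; last first.
  have -> : D = set0.
    by apply/seteqP; split => // x /glohi /andP[? ?]; move: hi_lt0; lra.
  by rewrite !integral_set0 !mule0.
have mhE : measurable_fun D (EFin \o h) by exact/measurable_EFinP.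
have h0E x : D x -> 0 <= (h x)%:E by move=> Dx; rewrite lee_fin h0.
rewrite -!ge0_integralZl_EFin //; split; apply: le_ge0_integral => x Dx.
- by rewrite lee_fin mulr_ge0 // h0.
- by rewrite lee_fin ler_wpM2r ?h0 //; case/andP: (glohi x Dx).
- by rewrite lee_fin mulr_ge0 ?h0 //; case/andP: (glohi x Dx) => /(le_trans lo0).
- by rewrite lee_fin ler_wpM2r ?h0 //; case/andP: (glohi x Dx).
Qed.

End nonnegative_integral_bounds.

Section inner_integrals.
Context {R : realType}.
Notation mu := (@lebesgue_measure R).

Lemma integral01_powR_addr_bounds (a s c : R) : 0 < a -> 0 <= s -> 0 <= c ->
  ((s `^ a * (((1 + c) `^ a - c `^ a) / a))%:E <=
     \int[mu]_(v in `[0%R, 1%R]) ((v + s) `^ a * (v + c) `^ (a - 1))%:E)%E /\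
  (\int[mu]_(v in `[0%R, 1%R]) ((v + s) `^ a * (v + c) `^ (a - 1))%:E <=
     ((1 + s) `^ a * (((1 + c) `^ a - c `^ a) / a))%:E)%E.
Proof.
move=> a0 s0 c0.
rewrite (EFinM (s `^ a)) (EFinM ((1 + s) `^ a)) -integral01_powR_addr //.
apply: integralM_bounds => //.
- apply: measurable_funTS; apply: measurableT_comp (measurable_powR _) _.
  exact: measurable_funD.
- by move=> v _; exact: powR_ge0.
- exact: powR_ge0.
- move=> v; rewrite /= in_itv /= => /andP[v0 v1].
  by apply/andP; split; apply: ge0_ler_powR; rewrite ?nnegrE; lra.
Qed.

Lemma integral01_powR_affine_bounds (a x m : R) : 0 < a -> 0 <= x <= m ->
  ((x `^ a / a)%:E <=
     \int[mu]_(y in `[0%R, 1%R]) ((y * (m - x) + x) `^ a * y `^ (a - 1))%:E)%E /\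
  (\int[mu]_(y in `[0%R, 1%R]) ((y * (m - x) + x) `^ a * y `^ (a - 1))%:E <=
     (m `^ a / a)%:E)%E.
Proof.
move=> a0 /andP[x0 xm].
have int_y : (\int[mu]_(y in `[0%R, 1%R]) (y `^ (a - 1))%:E = (a^-1)%:E)%E.
  under eq_integral do rewrite -[X in X `^ _]addr0.
  by rewrite integral01_powR_addr // addr0 powR1 powR0 ?gt_eqF // subr0 div1r.
rewrite !EFinM -int_y; apply: integralM_bounds => //.
- exact: measurable_funTS (measurable_powR _).
- by move=> y _; exact: powR_ge0.
- exact: powR_ge0.
- move=> y; rewrite /= in_itv /= => /andP[y0 y1].
  have : 0 <= y * (m - x) <= m - x by rewrite mulr_ge0 ?ler_piMl; lra.
  by move=> /andP[? ?]; apply/andP; split; apply: ge0_ler_powR; rewrite ?nnegrE; lra.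
Qed.

End inner_integrals.

Section fractional_kernel_bounds.
Context {R : realType}.
Notation mu := (@lebesgue_measure R).

Lemma c_H_ge0 (H : R) : 0 <= c_H H.
Proof. exact: sqrtr_ge0. Qed.

Lemma j_integrand_bounds (H m x : R) : 1 / 2 < H -> 0 <= x <= m - 1 ->
  let J := (\int[mu]_(v in `[0%R, 1%R])
      ((v + m - 1) `^ (H - 1 / 2) * (v + m - 1 - x) `^ (H - 3 / 2))%:E)%E in
  let phi := (m - x) `^ (H - 1 / 2) - (m - 1 - x) `^ (H - 1 / 2) in
  (((m - 1) `^ (H - 1 / 2) / (H - 1 / 2) * (x `^ (1 / 2 - H) * phi))%:E
     <= (x `^ (1 / 2 - H))%:E * J)%E /\
  ((x `^ (1 / 2 - H))%:E * J
     <= (m `^ (H - 1 / 2) / (H - 1 / 2) * (x `^ (1 / 2 - H) * phi))%:E)%E.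
Proof.
move=> H12 /andP[x0 xm] J phi; set a := H - 1 / 2.
have a0 : 0 < a by rewrite subr_gt0.
have s0 : 0 <= m - 1 by lra.
have c0 : 0 <= m - 1 - x by lra.
have := integral01_powR_addr_bounds _ _ _ a0 s0 c0.
have -> : 1 + (m - 1) = m by ring.
have -> : 1 + (m - 1 - x) = m - x by ring.
have -> : (\int[mu]_(v in `[0%R, 1%R])
    ((v + (m - 1)) `^ a * (v + (m - 1 - x)) `^ (a - 1))%:E)%E = J.
  rewrite /J (_ : H - 3 / 2 = a - 1); last by rewrite /a; lra.
  by apply: eq_integral => v _; rewrite !addrA.
move=> [Jlo Jhi].
have xa0 : (0 <= (x `^ (1 / 2 - H))%:E)%E by rewrite lee_fin powR_ge0.
split.
- apply: le_trans (lee_wpmul2l xa0 Jlo).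
  by rewrite -EFinM lee_fin le_eqVlt; apply/orP; left; apply/eqP; rewrite /phi; ring.
- apply: le_trans (lee_wpmul2l xa0 Jhi) _.
  by rewrite -EFinM lee_fin le_eqVlt; apply/orP; left; apply/eqP; rewrite /phi; ring.
Qed.

Lemma j_nH_bounds (H sigma : R) (n i : nat) : 1 / 2 < H -> 0 <= sigma ->
  (1 <= i)%N -> (i <= n - 1)%N ->
  ((sigma * c_H H * (n%:R - 1) `^ (H - 1 / 2))%:E * I_n H n i
     <= j_nH H sigma n i)%E /\
  (j_nH H sigma n i <= (sigma * c_H H * n%:R `^ (H - 1 / 2))%:E * I_n H n i)%E.
Proof.
move=> H12 sigma0 i1 i_n; set a := H - 1 / 2; set m : R := n%:R.
have a0 : 0 < a by rewrite subr_gt0.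
have C_HE : sigma * C_H H = sigma * c_H H * a by rewrite /C_H mulrA.
pose D := `[i%:R - 1, i%:R]%classic : set R.
have D_sub x : D x -> 0 <= x <= m - 1.
  have i1R : 1 <= i%:R :> R by rewrite ler1n.
  have imR : i%:R <= m - 1 by rewrite lerBrDr /m natr1 ler_nat; lia.
  by rewrite /D /= in_itv /= => /andP[? ?]; apply/andP; split; lra.
pose f x := x `^ (1 / 2 - H) * phi_nH H n x.
have f0 x : D x -> 0 <= f x.
  move=> /D_sub /andP[x0 xm]; rewrite /f /phi_nH -/a -/m mulr_ge0 ?powR_ge0 // subr_ge0.
  by rewrite ge0_ler_powR ?nnegrE //; lra.
have mf : measurable_fun D (EFin \o f).
  apply/measurable_EFinP/measurable_funTS/measurable_funM.
    exact: measurableT_comp (measurable_powR _) _.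
  by apply: measurable_funB; apply: measurableT_comp (measurable_powR _) _;
    exact: measurable_funB.
have scale k : 0 <= k -> ((sigma * c_H H * k)%:E * I_n H n i =
    (sigma * C_H H)%:E * \int[mu]_(x in D) (k / a * f x)%:E)%E.
  move=> k0; under eq_integral do rewrite EFinM.
  rewrite ge0_integralZl_EFin ?divr_ge0 ?(ltW a0) //; last exact: measurable_itv.
  by rewrite muleA -EFinM C_HE /I_n; congr (_%:E * _)%E; field; rewrite gt_eqF.
have C_H0 : (0 <= (sigma * C_H H)%:E)%E.
  by rewrite lee_fin C_HE !mulr_ge0 ?c_H_ge0 // ltW.
rewrite /j_nH -/m !scale ?powR_ge0 //; split; apply: lee_wpmul2l => //.
- apply: le_ge0_integral => x Dx; last by have [] := j_integrand_bounds _ _ _ H12 (D_sub x Dx).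
  by rewrite lee_fin mulr_ge0 ?divr_ge0 ?powR_ge0 ?f0 // ltW.
- apply: le_ge0_integral => x Dx; last by have [] := j_integrand_bounds _ _ _ H12 (D_sub x Dx).
  rewrite mule_ge0 ?lee_fin ?powR_ge0 //.
  by apply: integral_ge0 => v _; rewrite lee_fin mulr_ge0 ?powR_ge0.
Qed.


Lemma g_integrand_bounds (H m x : R) : 1 / 2 < H -> 1 < m -> m - 1 <= x <= m ->
  let M := (\int[mu]_(y in `[0%R, 1%R])
      ((y * (m - x) + x) `^ (H - 1 / 2) * y `^ (H - 3 / 2))%:E)%E in
  let w := x `^ (1 / 2 - H) * (m - x) `^ (H - 1 / 2) in
  (((H - 1 / 2)^-1 * (m - x) `^ (H - 1 / 2))%:E <= w%:E * M)%E /\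
  (w%:E * M <= ((m - 1) `^ (1 / 2 - H) * m `^ (H - 1 / 2) / (H - 1 / 2)
                 * (m - x) `^ (H - 1 / 2))%:E)%E.
Proof.
move=> H12 m1 /andP[x1 xm] M w; set a := H - 1 / 2.
have a0 : 0 < a by rewrite subr_gt0.
have x0 : 0 < x by lra.
have H32 : H - 3 / 2 = a - 1 by rewrite /a; lra.
have x_in : 0 <= x <= m by rewrite (ltW x0) xm.
have [Mlo Mhi] := integral01_powR_affine_bounds _ _ _ a0 x_in.
rewrite -H32 -/M in Mlo Mhi.
have w0 : (0 <= w%:E)%E by rewrite lee_fin mulr_ge0 ?powR_ge0.
split.
- apply: le_trans (lee_wpmul2l w0 Mlo); rewrite -EFinM lee_fin le_eqVlt.
  apply/orP; left; apply/eqP.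
  have xx : x `^ (1 / 2 - H) * x `^ a = 1.
    rewrite -powRD; last by apply/implyP => _; rewrite gt_eqF.
    by rewrite (_ : 1 / 2 - H + a = 0) ?powRr0 // /a; lra.
  by rewrite /w -[LHS]mul1r -{1}xx; ring.
- apply: le_trans (lee_wpmul2l w0 Mhi) _; rewrite -EFinM lee_fin.
  pose Q := (m - x) `^ a * (m `^ a / a).
  have -> : w * (m `^ a / a) = x `^ (1 / 2 - H) * Q by rewrite /w /Q; ring.
  have -> : (m - 1) `^ (1 / 2 - H) * m `^ a / a * (m - x) `^ a =
      (m - 1) `^ (1 / 2 - H) * Q by rewrite /Q; ring.
  apply: ler_wpM2r; first by rewrite /Q !mulr_ge0 ?powR_ge0 ?invr_ge0 ?ltW.
  by apply: le0_ger_powR; rewrite ?posrE; lra.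
Qed.

Lemma g_nH_bounds (H sigma : R) (n : nat) : 1 / 2 < H -> 0 <= sigma -> (1 < n)%N ->
  ((g_H H sigma)%:E <= g_nH H sigma n)%E /\
  (g_nH H sigma n <= (g_H H sigma * (1 + 1 / (n%:R - 1)) `^ (H - 1 / 2))%:E)%E.
Proof.
move=> H12 sigma0 n1; set a := H - 1 / 2; set m : R := n%:R; set p := H + 1 / 2.
have a0 : 0 < a by rewrite subr_gt0.
have p0 : 0 < p by rewrite /p; lra.
have m1 : 1 < m by rewrite /m ltr1n.
have C_HE : sigma * C_H H = sigma * c_H H * a by rewrite /C_H mulrA.
pose D := `[m - 1, m]%classic : set R.
have D_sub x : D x -> m - 1 <= x <= m by rewrite /D /= in_itv.
have outer k : 0 <= k -> ((sigma * C_H H * (k / p))%:E =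
    (sigma * C_H H)%:E * \int[mu]_(x in D) (k * (m - x) `^ a)%:E)%E.
  move=> k0; under eq_integral do rewrite EFinM.
  rewrite ge0_integralZl_EFin //; first last.
  - apply/measurable_EFinP/measurable_funTS.
    by apply: measurableT_comp (measurable_powR _) _; exact: measurable_funB.
  - by move=> x _; rewrite lee_fin powR_ge0.
  - exact: measurable_itv.
  have -> : a = p - 1 by rewrite /a /p; lra.
  rewrite /D integral_powR_subr //; last lra.
  by rewrite subKr powR1 div1r -!EFinM.
have gE : g_H H sigma = sigma * C_H H * (a^-1 / p).
  by rewrite /g_H C_HE -/p; field; rewrite !gt_eqF.
have C_H0 : (0 <= (sigma * C_H H)%:E)%E.
  by rewrite lee_fin C_HE !mulr_ge0 ?c_H_ge0 // ltW.
rewrite /g_nH -/m -/a; split.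
- rewrite gE outer; last by rewrite invr_ge0 ltW.
  apply: lee_wpmul2l => //; apply: le_ge0_integral => x Dx.
    by rewrite lee_fin mulr_ge0 ?invr_ge0 ?powR_ge0 ?ltW.
  by have [] := g_integrand_bounds _ _ _ H12 m1 (D_sub x Dx).
- rewrite powR_one_plus_inv_sub1 // opprB.
  have -> : g_H H sigma * (m `^ a * (m - 1) `^ (1 / 2 - H)) =
      sigma * C_H H * ((m - 1) `^ (1 / 2 - H) * m `^ a / a / p) by rewrite gE; ring.
  rewrite outer; last by rewrite !mulr_ge0 ?powR_ge0 ?invr_ge0 ?ltW.
  apply: lee_wpmul2l => //; apply: le_ge0_integral => x Dx.
    rewrite mule_ge0 ?lee_fin ?mulr_ge0 ?powR_ge0 //.
    by apply: integral_ge0 => y _; rewrite lee_fin mulr_ge0 ?powR_ge0.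
  by have [] := g_integrand_bounds _ _ _ H12 m1 (D_sub x Dx).
Qed.

End fractional_kernel_bounds.

Theorem lemma4p2 (R : realType) (H sigma : R) (N : nat) :
  1 / 2 < H -> H < 1 -> 0 < sigma ->
  (forall n i : nat, (1 <= i)%N -> (i <= n - 1)%N -> (n - 1 < N)%N ->
     (((sigma * c_H H * (n%:R - 1) `^ (H - 1 / 2))%:E * I_n H n i
        <= j_nH H sigma n i)%E /\
      (j_nH H sigma n i
        <= (sigma * c_H H * n%:R `^ (H - 1 / 2))%:E * I_n H n i)%E)) /\
  (forall n : nat, (1 < n)%N -> (n <= N)%N ->
     ((g_H H sigma)%:E <= g_nH H sigma n)%E /\
     (g_nH H sigma n
        <= (g_H H sigma * (1 + 1 / (n%:R - 1)) `^ (H - 1 / 2))%:E)%E).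
Proof.
move=> H12 _ /ltW sigma0; split => [n i i1 i_n _ | n n1 _].
- exact: j_nH_bounds.
- exact: g_nH_bounds.
Qed.
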